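(* Let $G$ be a simple connected graph with $n$ vertices and $m$ edges, let $k\ge1$ be an integer, let $S_k(G)$ be the $k$-parallel subdivision graph of $G$, and let $N$ denote the set of the $km$ new (subdivision) vertices of $S_k(G)$, so $V(S_k(G))=V(G)\cup N$. Let $i\neq j$ be vertices of $S_k(G)$. Then: (1) If $i,j\in V(G)$, then $E_iT_j(S_k(G))=4E_iT_j(G)$. (2) If $i\in N$, $j\in V(G)$ and the two neighbours of $i$ in $S_k(G)$ are $s,t$, then $E_iT_j(S_k(G))=1+2E_sT_j(G)+2E_tT_j(G)$ and $E_jT_i(S_k(G))=2km-1+2\big[E_jT_s(G)+E_jT_t(G)\big]-\big[E_tT_s(G)+E_sT_t(G)\big]$. (3) If $i,j\in N$, the neighbours of $i$ in $S_k(G)$ are $s,t$ and the neighbours of $j$ are $p,q$, then $E_iT_j(S_k(G))=2km+E_sT_p(G)+E_sT_q(G)+E_tT_p(G)+E_tT_q(G)-E_qT_p(G)-E_pT_q(G)$ and $E_jT_i(S_k(G))=2km+E_pT_s(G)+E_qT_s(G)+E_pT_t(G)+E_qT_t(G)-E_tT_s(G)-E_sT_t(G)$.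
   Context: The $k$-parallel subdivision graph $S_k(G)$ is obtained from $G$ by replacing each edge $uv$ of $G$ by $k$ internally disjoint paths $u-w-v$ of length $2$ (each with its own new middle vertex $w$); the two neighbours of a new vertex $w$ are the endpoints $u,v$ of the corresponding edge of $G$. For a connected graph $H$ and vertices $a,b$, $E_aT_b(H)$ denotes the expected hitting time: the expected number of steps the simple random walk on $H$ started at $a$ needs to first reach $b$ (with $E_aT_a(H)=0$). *)

From HB Require Import structures.
From mathcomp Require Import all_boot all_order all_algebra.
From mathcomp Require Import boolp classical_sets reals ereal topology normedtype sequences.
Set Implicit Arguments. Unset Strict Implicit. Unset Printing Implicit Defensive.
Import Order.TTheory GRing.Theory Num.Theory.
Local Open Scope ring_scope.

Definition deg (V : finType) (adj : rel V) (x : V) : nat := #|[set y | adj x y]|.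

(* fpt adj b t a = probability that the simple random walk started at a
   first reaches b at exactly step t (first-passage distribution). *)
Fixpoint fpt (R : realType) (V : finType) (adj : rel V) (b : V) (t : nat) (a : V) : R :=
  match t with
  | 0 => (a == b)%:R
  | t'.+1 => if a == b then 0
             else \sum_(y | adj a y) ((deg adj a)%:R^-1 * fpt R adj b t' y)
  end.

Definition hitting_time (R : realType) (V : finType) (adj : rel V) (a b : V) : R :=
  fine (\sum_(t <oo) ((t%:R * fpt R adj b t a)%:E))%E.

Definition is_edge (T : finType) (e : rel T) (E : {set T}) : bool :=
  [exists u, exists v, e u v && (E == [set u; v])].

Definition edgeT (T : finType) (e : rel T) := {E : {set T} | is_edge e E}.

Definition num_edges (T : finType) (e : rel T) : nat := #|[set E : {set T} | is_edge e E]|.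

(* Vertices of S_k(G): old vertices (inl) and new vertices (inr (edge, copy index)). *)
Definition SkV (T : finType) (e : rel T) (k : nat) : finType :=
  (T + (edgeT e * 'I_k))%type.

Definition Sk_adj (T : finType) (e : rel T) (k : nat) : rel (SkV e k) :=
  fun x y => match x, y with
  | inl u, inr p => u \in val p.1
  | inr p, inl u => u \in val p.1
  | _, _ => false
  end.

(* Hitting times of a fixed target b are the unique solution of the first-step
   equations h b = 0 and h a = 1 + (mean of h over the neighbours of a): uniqueness
   is the maximum principle, and existence holds because the probability of not
   having reached b decays geometrically, so the series defining E_a T_b converges
   and satisfies the equations in the limit.  It therefore suffices to exhibit
   solutions on S_k(G).  A new vertex has degree 2, so its value is forced to be 1
   plus the mean of the values at its two ends; at an old vertex x the neighbours
   in S_k(G) are k copies of the edges of G at x, and the equation reduces to an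
   identity in G which follows from the first-step equations of G and from Kac's
   return-time identity sum_(w ~ z) E_w T_z = 2m - deg z. *)

From HB Require Import structures.
From mathcomp Require Import all_boot all_order all_algebra.
From mathcomp Require Import boolp classical_sets reals ereal topology normedtype sequences.
From mathcomp Require Import ring lra.
Set Implicit Arguments. Unset Strict Implicit. Unset Printing Implicit Defensive.
Import Order.TTheory GRing.Theory Num.Theory.
Import numFieldNormedType.Exports.
Local Open Scope ring_scope.

Lemma natr_deg (R : pzSemiRingType) (V : finType) (adj : rel V) (a : V) :
  (deg adj a)%:R = \sum_(y | adj a y) (1 : R).
Proof. by rewrite sumr_const /deg cardsE. Qed.

Lemma sum_set2 (R : nmodType) (T : finType) (F : T -> R) x w :
  x != w -> \sum_(z in [set x; w]) F z = F x + F w.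
Proof. by move=> xw; rewrite big_setU1 /= ?inE // big_set1. Qed.

Lemma set2_eq2r (T : finType) (x a b : T) : a != x -> ([set x; a] == [set x; b]) = (a == b).
Proof.
move=> ax; apply/eqP/eqP => [/setP/(_ a)|-> //].
by rewrite !inE eqxx orbT (negbTE ax) => /esym/eqP.
Qed.

Lemma sumr_skip (V : zmodType) (I : finType) (P : pred I) (F : I -> V) i0 :
  \sum_(i | P i) (if i == i0 then 0 else F i) = \sum_(i | P i) F i - F i0 *+ P i0.
Proof.
case: (boolP (P i0)) => [Pi0|nPi0]; last first.
  by rewrite subr0; apply: eq_bigr => i Pi; case: eqP => // eq_i; rewrite -eq_i Pi in nPi0.
rewrite !(bigD1 i0 Pi0) /= eqxx add0r addrAC subrr add0r.
by apply: eq_bigr => i /andP[_ /negbTE ->].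
Qed.

Section FirstPassage.
Variables (R : realType) (V : finType) (adj : rel V) (b : V).
Hypothesis adj_connected : forall x y, connect adj x y.

Local Notation fp := (fpt R adj b).
Local Notation invdeg a := ((deg adj a)%:R^-1 : R).

Lemma deg_gt0 a : a != b -> (0 < deg adj a)%N.
Proof.
move=> ab; have /connectP[[|y p] /= abp ab_last] := adj_connected a b.
  by rewrite ab_last eqxx in ab.
by rewrite card_gt0; apply/set0Pn; exists y; rewrite inE; case/andP: abp.
Qed.

Lemma invdeg_ge0 a : 0 <= invdeg a.
Proof. by rewrite invr_ge0 ler0n. Qed.

Lemma sum_invdeg a : a != b -> \sum_(y | adj a y) invdeg a = 1.
Proof.
move=> ab; under eq_bigr do rewrite -[invdeg a]mulr1.
rewrite -big_distrr /= -natr_deg mulVf // pnatr_eq0 -lt0n.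
exact: deg_gt0.
Qed.

Lemma fpt_ge0 t a : 0 <= fp t a.
Proof.
elim: t a => [|t IH] a /=; first by rewrite ler0n.
by case: ifP => _ //; apply: sumr_ge0 => y _; rewrite mulr_ge0 ?invdeg_ge0.
Qed.

Definition survival n a : R := 1 - \sum_(0 <= t < n) fp t a.

Definition hitting_partial n a : R := \sum_(0 <= t < n) t%:R * fp t a.

Lemma survival0 a : survival 0 a = 1.
Proof. by rewrite /survival big_geq // subr0. Qed.

Lemma survival_rec n a : survival n.+1 a =
  if a == b then 0 else \sum_(y | adj a y) invdeg a * survival n y.
Proof.
rewrite /survival big_nat_recl //=; have [_|ab] := eqVneq a b.
  by rewrite /= big1_eq addr0 subrr.
under [in RHS]eq_bigr do rewrite mulrBr mulr1.
rewrite sumrB sum_invdeg // add0r exchange_big /=; congr (_ - _).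
by apply: eq_bigr => y _; rewrite big_distrr.
Qed.

Lemma hitting_partial_rec n a : hitting_partial n.+1 a =
  if a == b then 0
  else \sum_(y | adj a y) invdeg a * (hitting_partial n y + (1 - survival n y)).
Proof.
rewrite /hitting_partial big_nat_recl //= mul0r add0r.
have [_|ab] := eqVneq a b; first by rewrite big1 // => t _; rewrite mulr0.
under [in RHS]eq_bigr do rewrite /survival subKr.
under eq_bigr do rewrite big_distrr /=.
rewrite exchange_big /=; apply: eq_bigr => y _.
rewrite -big_split big_distrr /=; apply: eq_bigr => t _.
by rewrite -addn1 natrD; ring.
Qed.

Lemma survival_le1 n a : survival n a <= 1.
Proof. by rewrite lerBlDr lerDl sumr_ge0 // => t _; apply: fpt_ge0. Qed.

Lemma survival_ge0 n a : 0 <= survival n a.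
Proof.
elim: n a => [|n IH] a; first by rewrite survival0.
rewrite survival_rec; case: eqP => // _.
by apply: sumr_ge0 => y _; rewrite mulr_ge0 ?invdeg_ge0.
Qed.

Lemma fpt_survival t a : fp t a = survival t a - survival t.+1 a.
Proof. by rewrite /survival big_nat_recr //=; lra. Qed.

Lemma survivalS_le n a : survival n.+1 a <= survival n a.
Proof. by have := fpt_ge0 n a; rewrite fpt_survival subr_ge0. Qed.

Lemma survival_le m n a : (m <= n)%N -> survival n a <= survival m a.
Proof.
move=> /subnKC <-; elim: (n - m)%N => [|j IH]; first by rewrite addn0.
by rewrite addnS (le_trans (survivalS_le _ _)).
Qed.

Lemma avg_le_split a y (f : V -> R) M : a != b -> adj a y -> (forall z, f z <= M) ->
  \sum_(z | adj a z) invdeg a * f z <= invdeg a * f y + (1 - invdeg a) * M.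
Proof.
move=> ab ay fM.
have -> : 1 - invdeg a = \sum_(z | adj a z && (z != y)) invdeg a.
  by have := sum_invdeg ab; rewrite (bigD1 y) //=; lra.
rewrite (bigD1 y) //= lerD2l mulr_suml ler_sum // => z _.
by rewrite ler_wpM2l ?invdeg_ge0.
Qed.

Lemma survival_shift s r : (forall z, survival s z <= r) ->
  forall t a, survival (t + s) a <= r * survival t a.
Proof.
move=> sr; elim=> [|t IH] a; first by rewrite add0n survival0 mulr1.
rewrite addSn !survival_rec; case: eqP => _; first by rewrite mulr0.
rewrite mulr_sumr ler_sum // => y _.
by rewrite mulrCA ler_wpM2l ?invdeg_ge0.
Qed.

Let N := #|V|.
Let c : R := N%:R^-1.
Let rho : R := 1 - c ^+ N.
Let bound : R := N%:R / c ^+ N.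

Let N_gt0 : (0 < N)%N.
Proof. by apply/card_gt0P; exists b. Qed.

Let c_gt0 : 0 < c.
Proof. by rewrite invr_gt0 ltr0n N_gt0. Qed.

Let c_le1 : c <= 1.
Proof. by rewrite invf_le1 ?ltr0n // ler1n. Qed.

Let rho_ge0 : 0 <= rho.
Proof. by rewrite subr_ge0 exprn_ile1 // ltW. Qed.

Let c_le_invdeg a : a != b -> c <= invdeg a.
Proof.
move=> ab; rewrite lef_pV2 ?posrE ?ltr0n ?deg_gt0 //.
by rewrite ler_nat /deg max_card.
Qed.

Lemma survival_path p a : path adj a p -> last a p = b ->
  survival (size p).+1 a <= 1 - c ^+ size p.
Proof.
elim: p a => [|y p IH] a /=; first by move=> _ ->; rewrite survival_rec eqxx expr0 subrr.
case/andP=> ay yp py; rewrite survival_rec; case: eqP => [_|/eqP ab].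
  by rewrite subr_ge0 exprn_ile1 // ltW.
apply: le_trans (avg_le_split (f := survival _) ab ay (fun z => survival_le1 _ z)) _.
have := IH y yp py; have := c_le_invdeg ab; have := exprn_ge0 (size p) (ltW c_gt0).
rewrite exprS; have := invdeg_ge0 a.
move: (invdeg a) (c ^+ size p) (survival _ y) => d w u *; nra.
Qed.

Lemma survival_card a : survival N a <= rho.
Proof.
have /connectP[p abp ab_last] := adj_connected a b.
case: (shortenP abp) ab_last => q abq uq _ ab_last.
have size_q : (size q < N)%N by move/card_uniqP: uq => /= <-; apply: max_card.
apply: le_trans (survival_le _ size_q) (le_trans (survival_path abq (esym ab_last)) _).
by rewrite lerD2l lerN2 ler_wiXn2l // ?ltW // ltnW.
Qed.

Let bound_fix : N%:R + rho * bound = bound.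
Proof. by rewrite /rho /bound; field; rewrite expf_neq0 // gt_eqF. Qed.

(* [survival] shrinks by the factor [rho] every [N] steps, and [bound] is the
   fixed point of [x |-> N + rho * x]. *)
Lemma sum_survival_le n a : \sum_(t < n) survival t a <= bound.
Proof.
have sum_le m : \sum_(t < m) survival t a <= m%:R.
  have -> : m%:R = \sum_(t < m) (1 : R) by rewrite sumr_const card_ord.
  by apply: ler_sum => t _; apply: survival_le1.
have N_le_bound : N%:R <= bound.
  rewrite ler_pdivlMr ?exprn_gt0 // ler_piMr ?ler0n // exprn_ile1 // ltW //.
elim/ltn_ind: n => n IH; case: (ltnP n N) => [ltnN|leNn].
  by apply: le_trans (sum_le n) (le_trans _ N_le_bound); rewrite ler_nat ltnW.
rewrite -(subnKC leNn) big_split_ord /= -bound_fix lerD ?sum_le //.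
apply: le_trans (_ : _ <= \sum_(t < n - N) rho * survival t a) _.
  by apply: ler_sum => t _; rewrite addnC; apply: survival_shift survival_card _ _.
rewrite -mulr_sumr ler_wpM2l // IH // ltn_subrL N_gt0.
exact: leq_trans N_gt0 leNn.
Qed.

Lemma hitting_partial_ge0 n a : 0 <= hitting_partial n a.
Proof. by apply: sumr_ge0 => t _; rewrite mulr_ge0 ?ler0n ?fpt_ge0. Qed.

(* Both sides are E_a[min(T_b, n)]. *)
Lemma hitting_partial_survival n a :
  hitting_partial n a + n%:R * survival n a = \sum_(t < n) survival t.+1 a.
Proof.
elim: n => [|n IH]; first by rewrite /hitting_partial big_geq // big_ord0 mul0r addr0.
rewrite /hitting_partial big_nat_recr //= big_ord_recr /= -IH fpt_survival -addn1 natrD.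
rewrite /hitting_partial; lra.
Qed.

Lemma hitting_partial_survival_le n a :
  hitting_partial n a + n%:R * survival n a <= bound.
Proof.
rewrite hitting_partial_survival; apply: le_trans (sum_survival_le n a).
by apply: ler_sum => t _; apply: survival_le.
Qed.

Lemma hitting_partial_cvg a : cvgn (hitting_partial^~ a).
Proof.
apply: nondecreasing_is_cvgn.
  move=> m n mn /=; rewrite /hitting_partial (big_cat_nat (leq0n m) mn) //= lerDl.
  by apply: sumr_ge0 => t _; rewrite mulr_ge0 ?ler0n ?fpt_ge0.
exists bound => _ [n _ <-]; apply: le_trans (hitting_partial_survival_le n a).
by rewrite lerDl mulr_ge0 ?ler0n ?survival_ge0.
Qed.

Lemma hitting_timeE a : hitting_time R adj a b = limn (hitting_partial^~ a).
Proof.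
rewrite /hitting_time (_ : (fun n => _) = EFin \o hitting_partial^~ a).
  by rewrite EFin_lim //; apply: hitting_partial_cvg.
by apply: funext => n /=; rewrite sumEFin.
Qed.

Lemma survival_cvg0 a : (survival^~ a @ \oo --> (0 : R))%classic.
Proof.
rewrite -cvg_shiftS; apply: (@squeeze_cvgr _ _ _ _ (fun=> 0) (fun n => bound * harmonic n)).
- apply: nearW => n /=; rewrite survival_ge0 /= /harmonic ler_pdivlMr ?ltr0n // mulrC.
  apply: le_trans (hitting_partial_survival_le n.+1 a).
  by rewrite lerDr hitting_partial_ge0.
- exact: cvg_cst.
- by rewrite -(mulr0 bound); apply: cvgMl_tmp; apply: cvg_harmonic.
Qed.

Lemma hitting_time_target : hitting_time R adj b b = 0.
Proof.
rewrite hitting_timeE (_ : hitting_partial^~ b = fun=> 0) ?lim_cst //.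
apply: funext => -[|n]; first by rewrite /hitting_partial big_geq.
by rewrite hitting_partial_rec eqxx.
Qed.

Lemma hitting_time_rec a : a != b ->
  hitting_time R adj a b = 1 + \sum_(y | adj a y) invdeg a * hitting_time R adj y b.
Proof.
move=> ab.
have step : (fun n => hitting_partial n.+1 a) =
    (fun n => \sum_(y | adj a y) invdeg a * (hitting_partial n y + (1 - survival n y))).
  by apply: funext => n; rewrite hitting_partial_rec (negbTE ab).
have : ((fun n => hitting_partial n.+1 a) @ \oo -->
    \sum_(y | adj a y) invdeg a * (hitting_time R adj y b + (1 - 0)))%classic.
  rewrite step; apply: cvg_big => [|y _]; first exact: add_continuous.
  apply: cvgMl_tmp; apply: cvgD; first by rewrite hitting_timeE; apply: hitting_partial_cvg.
  by apply: cvgB; [exact: cvg_cst | exact: survival_cvg0].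
rewrite (cvg_shiftS (hitting_partial^~ a)) hitting_timeE => /cvg_lim -> //.
under eq_bigr do rewrite subr0 mulrDr mulr1.
by rewrite big_split /= sum_invdeg // addrC.
Qed.

Lemma neighbour_eq_max x y (g : V -> R) M : x != b -> adj x y -> (forall z, g z <= M) ->
  g x = \sum_(z | adj x z) invdeg x * g z -> g x = M -> g y = M.
Proof.
move=> xb xy gM g_avg gxM; apply/eqP; rewrite eq_le gM /=.
have := avg_le_split xb xy gM; rewrite -g_avg gxM.
have : 0 < invdeg x by rewrite invr_gt0 ltr0n deg_gt0.
move: (invdeg x) => d d_gt0 M_le; rewrite -(ler_pM2l d_gt0); nra.
Qed.

Lemma harmonic_le0 (g : V -> R) : g b = 0 ->
  (forall a, a != b -> g a = \sum_(y | adj a y) invdeg a * g y) -> forall a, g a <= 0.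
Proof.
move=> gb g_avg; have [a0 _ g_max] := @arg_maxP _ R V b xpredT g isT.
have g_le z : g z <= g a0 by apply: g_max.
suff : g a0 <= 0 by move=> g0 a; apply: le_trans (g_le a) g0.
have key q x : path adj x q -> last x q = b -> g x = g a0 -> g a0 <= 0.
  elim: q x => [|y q IH] x /=; first by move=> _ -> <-; rewrite gb.
  case/andP=> xy yq q_last gx; have [xb|xb] := eqVneq x b; first by rewrite -gx xb gb.
  exact: IH y yq q_last (neighbour_eq_max xb xy g_le (g_avg x xb) gx).
have /connectP[p a0p p_last] := adj_connected a0 b.
exact: key p a0 a0p (esym p_last) erefl.
Qed.

Lemma hitting_time_unique (h : V -> R) : h b = 0 ->
  (forall a, a != b -> h a = 1 + \sum_(y | adj a y) invdeg a * h y) ->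
  forall a, hitting_time R adj a b = h a.
Proof.
move=> hb h_rec a.
have diff_le0 (f g : V -> R) : f b = 0 -> g b = 0 ->
    (forall x, x != b -> f x = 1 + \sum_(y | adj x y) invdeg x * f y) ->
    (forall x, x != b -> g x = 1 + \sum_(y | adj x y) invdeg x * g y) ->
    f a - g a <= 0.
  move=> fb gb f_rec g_rec; apply: (harmonic_le0 (g := fun x => f x - g x)) => [|x xb].
    by rewrite fb gb subrr.
  rewrite (f_rec x xb) (g_rec x xb); under [in RHS]eq_bigr do rewrite mulrBr.
  by rewrite sumrB; lra.
have := diff_le0 h (hitting_time R adj ^~ b) hb hitting_time_target h_rec hitting_time_rec.
have := diff_le0 (hitting_time R adj ^~ b) h hitting_time_target hb hitting_time_rec h_rec.
lra.
Qed.

End FirstPassage.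

Section Edges.
Variables (T : finType) (e : rel T).
Hypotheses (e_sym : symmetric e) (e_irr : irreflexive e).

Lemma is_edge_set2 x w : e x w -> is_edge e [set x; w].
Proof. by move=> xw; apply/existsP; exists x; apply/existsP; exists w; rewrite xw eqxx. Qed.

Definition edge_of x w (xw : e x w) : edgeT e := exist _ [set x; w] (is_edge_set2 xw).

Lemma edge_neq x w : e x w -> w != x.
Proof. by apply: contraTneq => ->; rewrite e_irr. Qed.

Lemma edgeP (E : edgeT e) : exists u v, e u v /\ val E = [set u; v].
Proof. by case: E => E /= /existsP[u /existsP[v /andP[euv /eqP ->]]]; exists u, v. Qed.

Lemma edge_other_end (E : edgeT e) x : x \in val E -> exists2 w, e x w & val E = [set x; w].
Proof.
have [u [v [euv ->]]] := edgeP E; rewrite !inE => /orP[]/eqP->; first by exists v.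
by exists u; rewrite 1?e_sym // finset.setUC.
Qed.

Lemma sum_edges_at (R : nmodType) x (F : {set T} -> R) :
  \sum_(E : edgeT e | x \in val E) F (val E) = \sum_(w | e x w) F [set x; w].
Proof.
transitivity (\sum_(E : edgeT e | x \in val E)
                \sum_(w | e x w && (val E == [set x; w])) F [set x; w]).
  apply: eq_bigr => E xE; have [w xw ->] := edge_other_end xE.
  rewrite (big_pred1 w) // => w' /=; rewrite set2_eq2r ?(edge_neq xw) // eq_sym.
  by have [->|] := eqVneq w' w; rewrite ?xw ?andbF.
rewrite (exchange_big_dep (e x)) => [|w E _ /andP[//]] /=; apply: eq_bigr => w xw.
rewrite (big_pred1 (edge_of xw)) // => E /=.
rewrite xw -[[set x; w]]/(val (edge_of xw)) val_eqE.
by case: eqP => [->|]; rewrite ?andbF // !inE eqxx.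
Qed.

Lemma card_edge (E : edgeT e) : #|val E| = 2%N.
Proof. by have [u [v [uv ->]]] := edgeP E; rewrite cards2 eq_sym edge_neq. Qed.

Lemma handshake : (\sum_x deg e x)%N = (2 * num_edges e)%N.
Proof.
transitivity (\sum_x \sum_(E : edgeT e | x \in val E) 1)%N.
  by apply: eq_bigr => x _; rewrite (sum_edges_at x (fun=> 1%N)) sum1_card /deg cardsE.
rewrite (exchange_big_dep xpredT) //=.
under eq_bigr do rewrite sum1_card card_edge.
by rewrite sum_nat_const card_sig /num_edges cardsE mulnC.
Qed.

End Edges.

Section GraphHitting.
Variables (R : realType) (T : finType) (e : rel T).
Hypotheses (e_sym : symmetric e) (e_irr : irreflexive e) (e_conn : forall x y, connect e x y).

Local Notation HG x z := (hitting_time R e x z).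
Local Notation dG x := ((deg e x)%:R : R).

Lemma natr_deg_neq0 x z : x != z -> dG x != 0.
Proof. by move=> xz; rewrite pnatr_eq0 -lt0n (deg_gt0 e_conn xz). Qed.

Lemma hitting_time_neighbours x z : x != z -> \sum_(w | e x w) HG w z = dG x * (HG x z - 1).
Proof.
move=> xz; rewrite (hitting_time_rec R e_conn xz) addrC addKr mulr_sumr.
by apply: eq_bigr => w _; rewrite mulrA mulfV ?mul1r ?(natr_deg_neq0 xz).
Qed.

(* Kac's formula E_z T_z^+ = 2m / deg z, obtained by double counting. *)
Lemma hitting_time_neighbours_self z :
  \sum_(w | e z w) HG w z = (2 * num_edges e)%:R - dG z.
Proof.
have double_count : \sum_x \sum_(w | e x w) HG w z = \sum_w dG w * HG w z.
  rewrite (exchange_big_dep xpredT) //=; apply: eq_bigr => w _.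
  rewrite natr_deg mulr_suml; apply: eq_big => [x|x _]; by rewrite 1?e_sym ?mul1r.
have off_diag : \sum_(a | a != z) \sum_(w | e a w) HG w z =
    \sum_(a | a != z) dG a * HG a z - \sum_(a | a != z) dG a.
  by rewrite -sumrB; apply: eq_bigr => a az; rewrite hitting_time_neighbours // mulrBr mulr1.
have sum_deg : \sum_x dG x = (2 * num_edges e)%:R by rewrite -natr_sum handshake.
have split_z (F : T -> R) : \sum_x F x = F z + \sum_(x | x != z) F x by rewrite (bigD1 z).
move: double_count sum_deg; rewrite !split_z off_diag.
rewrite (hitting_time_target R z e_conn) mulr0 add0r; lra.
Qed.

Lemma sum_neighbours_affine x (a c : R) (f : T -> R) :
  \sum_(w | e x w) (a + c * f w) = dG x * a + c * \sum_(w | e x w) f w.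
Proof.
rewrite big_split /= -mulr_sumr natr_deg mulr_suml.
by congr (_ + _); apply: eq_bigr => *; rewrite mul1r.
Qed.

Lemma hitting_time_neighbour_sum x z : \sum_(w | e x w) HG w z =
  dG x * (HG x z - 1) + (x == z)%:R * (2 * num_edges e)%:R.
Proof.
have [->|xz] := eqVneq x z; last by rewrite hitting_time_neighbours // mul0r addr0.
by rewrite hitting_time_neighbours_self (hitting_time_target R z e_conn) /=; ring.
Qed.

End GraphHitting.

Section Subdivision.
Variables (R : realType) (T : finType) (e : rel T).
Hypotheses (e_sym : symmetric e) (e_irr : irreflexive e) (e_conn : forall x y, connect e x y).
Variables (k : nat) (k_gt0 : (0 < k)%N).

Local Notation S := (@Sk_adj T e k).
Local Notation HG x z := (hitting_time R e x z).
Local Notation HS y z := (hitting_time R S y z).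
Local Notation dG x := ((deg e x)%:R : R).
Local Notation m := (num_edges e).

Let k_neq0 : k%:R != 0 :> R.
Proof. by rewrite pnatr_eq0 -lt0n. Qed.

Lemma Sk_sum_old x (F : SkV e k -> R) :
  \sum_(y | S (inl x) y) F y = \sum_(p : edgeT e * 'I_k | x \in val p.1) F (inr p).
Proof. by rewrite big_sumType /= big_pred0_eq add0r. Qed.

Lemma Sk_sum_new p (F : SkV e k -> R) :
  \sum_(y | S (inr p) y) F y = \sum_(u in val p.1) F (inl u).
Proof. by rewrite big_sumType /= big_pred0_eq addr0. Qed.

Lemma sum_edge_copies x (G : {set T} -> R) :
  \sum_(p : edgeT e * 'I_k | x \in val p.1) G (val p.1) = k%:R * \sum_(w | e x w) G [set x; w].
Proof.
rewrite -(sum_edges_at e_sym e_irr) mulr_sumr.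
rewrite (eq_bigr (fun E => \sum_(i : 'I_k) G (val E))) => [|E _]; last first.
  by rewrite sumr_const card_ord mulr_natl.
by rewrite pair_big /=; apply: eq_bigl => p; rewrite andbT.
Qed.

Lemma deg_Sk_old x : (deg S (inl x))%:R = k%:R * dG x :> R.
Proof. by rewrite !natr_deg Sk_sum_old (sum_edge_copies x (fun=> 1)). Qed.

Lemma deg_Sk_new p : (deg S (inr p))%:R = 2 :> R.
Proof. by rewrite natr_deg Sk_sum_new sumr_const card_edge. Qed.

Lemma Sk_connected (y z : SkV e k) : connect S y z.
Proof.
pose i0 : 'I_k := Ordinal k_gt0.
have old_old u v : connect S (inl u) (inl v).
  have /connectP[p uv ->] := e_conn u v.
  elim: p u uv => [|w p IH] u /=; first by rewrite connect0.
  case/andP=> uw wp; apply: connect_trans (IH w wp).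
  apply: (connect_trans (y := inr (edge_of uw, i0))); apply: connect1.
    by rewrite /= !inE eqxx.
  by rewrite /= !inE eqxx orbT.
have new_old p : exists2 u, connect S (inr p) (inl u) & connect S (inl u) (inr p).
  have [u [v [_ Ep]]] := edgeP p.1.
  by exists u; apply: connect1; rewrite /= Ep !inE eqxx.
case: y z => [u|p] [v|q].
- exact: old_old.
- by have [w _ wq] := new_old q; apply: connect_trans (old_old u w) wq.
- by have [w pw _] := new_old p; apply: connect_trans pw (old_old w v).
- have [w pw _] := new_old p; have [w' _ w'q] := new_old q.
  exact: connect_trans pw (connect_trans (old_old w w') w'q).
Qed.

Lemma Sk_new_ends p s t :
  (forall y, S (inr p) y = (y == inl s) || (y == inl t)) -> val p.1 = [set s; t].
Proof. by move=> ends; apply/setP => u; have := ends (inl u); rewrite /= !inE. Qed.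

(* Candidate hitting times on S_k(G): each new vertex gets the value forced by
   its own first-step equation. *)
Definition lift (h : T -> R) (y : SkV e k) : R :=
  match y with
  | inl x => h x
  | inr p => 1 + (\sum_(z in val p.1) h z) / 2
  end.

Lemma lift_new_rec h p :
  lift h (inr p) = 1 + \sum_(y | S (inr p) y) (deg S (inr p))%:R^-1 * lift h y.
Proof. by rewrite Sk_sum_new deg_Sk_new -mulr_sumr mulrC. Qed.

Lemma sum_lift_old h x : \sum_(p : edgeT e * 'I_k | x \in val p.1) lift h (inr p) =
  k%:R * (dG x * (1 + h x / 2) + (\sum_(w | e x w) h w) / 2).
Proof.
rewrite (sum_edge_copies x (fun E => 1 + (\sum_(z in E) h z) / 2)); congr (_ * _).
rewrite (eq_bigr (fun w => (1 + h x / 2) + h w / 2)) => [|w xw]; last first.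
  by rewrite sum_set2 1?eq_sym ?(edge_neq e_irr xw) //; ring.
rewrite big_split /= -mulr_suml; congr (_ + _).
by rewrite natr_deg mulr_suml; apply: eq_bigr => *; rewrite mul1r.
Qed.

Lemma hitting_time_Sk_to_old v y : HS y (inl v) = lift (fun x => 4 * HG x v) y.
Proof.
apply: (hitting_time_unique Sk_connected) => [|[x|p] yv];
  first by rewrite /= (hitting_time_target R v e_conn) mulr0.
  have xv : x != v by apply: contraNneq yv => ->.
  rewrite -mulr_sumr Sk_sum_old sum_lift_old deg_Sk_old -mulr_sumr /=.
  rewrite (hitting_time_neighbours R e_conn xv).
  by field; rewrite k_neq0 (natr_deg_neq0 R e_conn xv).
exact: lift_new_rec.
Qed.

Definition ht_to_new s t (x : T) : R :=
  (2 * k * m)%:R - 1 - (HG t s + HG s t) + 2 * (HG x s + HG x t).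

Lemma lift_ht_to_new p s t : s != t -> val p.1 = [set s; t] ->
  lift (ht_to_new s t) (inr p) = (2 * k * m)%:R.
Proof.
move=> st Ep; rewrite /= Ep sum_set2 // /ht_to_new.
by rewrite (hitting_time_target R s e_conn) (hitting_time_target R t e_conn); field.
Qed.

Lemma hitting_time_Sk_to_new p0 s t : s != t -> val p0.1 = [set s; t] ->
  forall y, HS y (inr p0) = if y == inr p0 then 0 else lift (ht_to_new s t) y.
Proof.
move=> st Ep0; apply: (hitting_time_unique Sk_connected) => [|y yp0]; first by rewrite eqxx.
rewrite (negbTE yp0); case: y yp0 => [x _|p _]; last first.
  by rewrite lift_new_rec !Sk_sum_new.
rewrite -mulr_sumr sumr_skip lift_ht_to_new // Sk_sum_old sum_lift_old /= Ep0.
rewrite deg_Sk_old /ht_to_new sum_neighbours_affine big_split /=.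
rewrite !(hitting_time_neighbour_sum R e_sym e_irr e_conn).
have ends_count : (x \in [set s; t])%:R = (x == s)%:R + (x == t)%:R :> R.
  by rewrite !inE; have [->|] := eqVneq x s; rewrite ?(negbTE st) ?addr0 ?add0r.
have dx : dG x != 0.
  have [->|xs] := eqVneq x s; first exact: (natr_deg_neq0 R e_conn st).
  exact: (natr_deg_neq0 R e_conn xs).
rewrite -[(2 * k * m)%:R *+ _]mulr_natl ends_count !natrM.
by field; rewrite k_neq0 dx.
Qed.

Lemma hitting_time_Sk_new_old p s t v : s != t -> val p.1 = [set s; t] ->
  HS (inr p) (inl v) = 1 + 2 * HG s v + 2 * HG t v.
Proof. by move=> st Ep; rewrite hitting_time_Sk_to_old /= Ep sum_set2 //; field. Qed.

Lemma hitting_time_Sk_new_new p1 p2 s t p q :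
  p1 != p2 -> s != t -> p != q -> val p1.1 = [set s; t] -> val p2.1 = [set p; q] ->
  HS (inr p1) (inr p2) =
    (2 * k * m)%:R + HG s p + HG s q + HG t p + HG t q - HG q p - HG p q.
Proof.
move=> p12 st pq Ep1 Ep2; rewrite (hitting_time_Sk_to_new pq Ep2) (inj_eq inr_inj).
by rewrite (negbTE p12) /= Ep1 sum_set2 // /ht_to_new; field.
Qed.

End Subdivision.

Theorem theorem4p2 (R : realType) (T : finType) (e : rel T)
  (e_sym : symmetric e) (e_irr : irreflexive e)
  (e_conn : forall x y : T, connect e x y)
  (k : nat) (k_pos : (0 < k)%N) :
  let S := @Sk_adj T e k in
  let m := num_edges e in
  let HG := @hitting_time R T e in
  let HS := @hitting_time R (SkV e k) S in
  (* (1) *)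
  (forall u v : T, u != v -> HS (inl u) (inl v) = 4 * HG u v) /\
  (* (2) *)
  (forall (p : edgeT e * 'I_k) (v s t : T), s != t ->
     (forall x, S (inr p) x = (x == inl s) || (x == inl t)) ->
     HS (inr p) (inl v) = 1 + 2 * HG s v + 2 * HG t v /\
     HS (inl v) (inr p) = (2 * k * m)%:R - 1 + 2 * (HG v s + HG v t)
                          - (HG t s + HG s t)) /\
  (* (3) *)
  (forall (p1 p2 : edgeT e * 'I_k) (s t p q : T), p1 != p2 -> s != t -> p != q ->
     (forall x, S (inr p1) x = (x == inl s) || (x == inl t)) ->
     (forall x, S (inr p2) x = (x == inl p) || (x == inl q)) ->
     HS (inr p1) (inr p2) = (2 * k * m)%:R + HG s p + HG s q + HG t p + HG t q
                            - HG q p - HG p q /\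
     HS (inr p2) (inr p1) = (2 * k * m)%:R + HG p s + HG q s + HG p t + HG q t
                            - HG t s - HG s t).
Proof.
move=> S m HG HS; rewrite {}/HS {}/HG {}/m {}/S.
split; [|split].
- by move=> u v _; rewrite (hitting_time_Sk_to_old R e_sym e_irr e_conn k_pos).
- move=> p v s t st /Sk_new_ends Ep; split; first exact: hitting_time_Sk_new_old.
  by rewrite (hitting_time_Sk_to_new R e_sym e_irr e_conn k_pos st Ep) /ht_to_new /=; ring.
- move=> p1 p2 s t p q p12 st pq /Sk_new_ends Ep1 /Sk_new_ends Ep2.
  split; first exact: hitting_time_Sk_new_new.
  have p21 : p2 != p1 by rewrite eq_sym.
  by rewrite (hitting_time_Sk_new_new R e_sym e_irr e_conn k_pos p21 pq st Ep2 Ep1); ring.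
Qed.
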